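(* Let $\overrightarrow{W}$ be a Morse sequence on a simplicial complex $K$. Then for every $p$, $\partial_p\circ\widetilde{\curlywedge}_p=\widetilde{\curlywedge}_{p-1}\circ\widehat{\partial}_p$ and $\delta_p\circ\widetilde{\curlyvee}_p=\widetilde{\curlyvee}_{p+1}\circ\widehat{\delta}_p$ as maps on $\widehat W[p]$.
   Context: A simplicial complex $K$ is a finite collection of non-empty finite sets closed under taking non-empty subsets; $\dim\sigma=|\sigma|-1$, $K^{(p)}$ the set of $p$-simplices. A pair $(\sigma,\tau)$ with $\sigma\subsetneq\tau$ is a free pair for $K$ if $\tau$ is the only simplex other than $\sigma$ containing $\sigma$; $K$ is then an elementary expansion of $K\setminus\{\sigma,\tau\}$. If $\nu$ is a facet (maximal simplex) of $K$, $K$ is an elementary filling of $K\setminus\{\nu\}$. A Morse sequence on $K$ is a sequence $\langle\emptyset=K_0,\dots,K_k=K\rangle$ with each $K_i$ an elementary expansion or filling of $K_{i-1}$; simplices added by fillings are critical; for an expansion $K_i=K_{i-1}\cup\{\sigma,\tau\}$, $\sigma\subset\tau$, $\sigma$ is lower regular and $\tau$ upper regular. $\widehat W$ is the set of critical simplices. $K[p]$ is the $\mathbb{Z}_2$-vector space of subsets of $K^{(p)}$ (sum = symmetric difference, $0=\emptyset$), $\widehat W[p]=\{c\in K[p]:c\subseteq\widehat W\}$. For $\sigma\in K^{(p)}$, $\partial(\sigma)=\{\tau\in K^{(p-1)}:\tau\subset\sigma\}$, $\delta(\sigma)=\{\tau\in K^{(p+1)}:\sigma\subset\tau\}$, with linear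 extensions $\partial_p:K[p]\to K[p-1]$, $\delta_p:K[p]\to K[p+1]$. The reference map $\curlywedge$ is the unique map assigning to each $p$-simplex an element of $\widehat W[p]$, extended linearly, with $\curlywedge(\nu)=\{\nu\}$ for critical $\nu$ and $\curlywedge(\tau)=0=\curlywedge(\partial(\tau))$ for upper regular $\tau$; the coreference map $\curlyvee$ is the unique such map with $\curlyvee(\nu)=\{\nu\}$ for critical $\nu$ and $\curlyvee(\sigma)=0=\curlyvee(\delta(\sigma))$ for lower regular $\sigma$. $\widehat\partial_p:\widehat W[p]\to\widehat W[p-1]$, $\widehat\partial_p(c)=\curlywedge(\partial_p(c))$, and $\widehat\delta_p:\widehat W[p]\to\widehat W[p+1]$, $\widehat\delta_p(c)=\curlyvee(\delta_p(c))$. The extension map $\widetilde\curlywedge_p:\widehat W[p]\to K[p]$ and coextension map $\widetilde\curlyvee_p:\widehat W[p]\to K[p]$ are the linear maps with $\widetilde\curlywedge(\kappa)=\{\nu\in K:\kappa\in\curlyvee(\nu)\}$ and $\widetilde\curlyvee(\kappa)=\{\nu\in K:\kappa\in\curlywedge(\nu)\}$ for critical $p$-simplices $\kappa$. *)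

(* Finite simplicial complexes over a finite vertex type V;
   simplices are nonempty {set V}; chains over Z_2 are sets of simplices. *)
From mathcomp Require Import all_boot.
Set Implicit Arguments. Unset Strict Implicit. Unset Printing Implicit Defensive.

Section Defs.
Variable V : finType.
Notation simplex := {set V}.
Notation chain := {set {set V}}.

Definition is_complex (C : chain) : Prop :=
  set0 \notin C /\
  forall s t : simplex, s \in C -> t \subset s -> t != set0 -> t \in C.

Definition free_pair (C : chain) (s t : simplex) : Prop :=
  s \proper t /\ s \in C /\ t \in C /\
  forall u : simplex, u \in C -> s \subset u -> u != s -> u = t.

Definition facet (C : chain) (n : simplex) : Prop :=
  n \in C /\ forall u : simplex, u \in C -> n \subset u -> u = n.

(* a step of a Morse sequence: an elementary filling (adding a critical
   simplex) or an elementary expansion (adding a free pair (s, t)) *)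
Inductive step := Fill of simplex | Exp of simplex & simplex.

Definition added (st : step) : chain :=
  match st with Fill n => [set n] | Exp s t => [set s; t] end.

Definition valid_step (L : chain) (st : step) : Prop :=
  match st with
  | Fill n => n \notin L /\ is_complex (n |: L) /\ facet (n |: L) n
  | Exp s t => s \notin L /\ t \notin L /\ s != t /\
               is_complex (L :|: [set s; t]) /\ free_pair (L :|: [set s; t]) s t
  end.

Fixpoint morse_from (L K : chain) (W : seq step) : Prop :=
  match W with
  | [::] => L = K
  | st :: W' => valid_step L st /\ morse_from (L :|: added st) K W'
  end.

Definition morse_seq (K : chain) (W : seq step) : Prop := morse_from set0 K W.

Definition crit (W : seq step) : chain :=
  [set n | has (fun st => if st is Fill m then m == n else false) W].
Definition lower_reg (W : seq step) : chain :=
  [set n | has (fun st => if st is Exp s _ then s == n else false) W].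
Definition upper_reg (W : seq step) : chain :=
  [set n | has (fun st => if st is Exp _ t then t == n else false) W].

(* Z_2 sum of chains = symmetric difference *)
Definition symd (A B : chain) : chain := (A :\: B) :|: (B :\: A).

Definition lin (f : simplex -> chain) (c : chain) : chain :=
  \big[symd/set0]_(s in c) f s.

Definition pskel (K : chain) (p : nat) : chain := [set s in K | #|s| == p.+1].

(* \hat W[p] : chains of critical p-simplices (as a set of allowed simplices) *)
Definition critp (K : chain) (W : seq step) (p : nat) : chain :=
  [set s in crit W | (s \in K) && (#|s| == p.+1)].

Definition bd (K : chain) (s : simplex) : chain :=
  [set t in K | (t \subset s) && (#|t|.+1 == #|s|)].
Definition cobd (K : chain) (s : simplex) : chain :=
  [set t in K | (s \subset t) && (#|t| == #|s|.+1)].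

(* characterizing properties of the reference map ∧ *)
Definition is_reference (K : chain) (W : seq step) (f : simplex -> chain) : Prop :=
  (forall s : simplex, s \in K -> f s \subset critp K W #|s|.-1) /\
  (forall n : simplex, n \in crit W -> f n = [set n]) /\
  (forall t : simplex, t \in upper_reg W -> f t = set0 /\ lin f (bd K t) = set0).

(* characterizing properties of the coreference map ∨ *)
Definition is_coreference (K : chain) (W : seq step) (g : simplex -> chain) : Prop :=
  (forall s : simplex, s \in K -> g s \subset critp K W #|s|.-1) /\
  (forall n : simplex, n \in crit W -> g n = [set n]) /\
  (forall s : simplex, s \in lower_reg W -> g s = set0 /\ lin g (cobd K s) = set0).

(* extension map: ext g k = {ν ∈ K : k ∈ g ν}; with g = ∨ this is \tilde∧,
   with g = ∧ it is the coextension \tilde∨ *)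
Definition ext (K : chain) (g : simplex -> chain) (k : simplex) : chain :=
  [set n in K | k \in g n].

End Defs.

(* Split K into critical, lower regular and upper regular simplices, and let E be the
   extension map.  A chain y containing no lower regular simplex, whose boundary contains
   none either, is determined by its critical part y_c: y = E y_c.  Indeed the difference
   is a chain of upper regular simplices with the same property, and such a chain vanishes
   by induction along the Morse sequence, since the partner s of an upper regular t lies
   in ∂t while no simplex added after t is a face of t.  For a critical chain c the chain
   E c and its boundary ∂(E c) have no lower regular simplex (∨ kills δ of lower regular
   simplices, and δ is the transpose of ∂), and ∂∂(E c) = 0, so ∂(E c) = E y_c.  Since ∧
   kills upper regular simplices, y_c = ∧ ∂(E c), and since ∧ kills ∂ of upper regular
   simplices and E c - c is upper regular, ∧ ∂(E c) = ∧ ∂ c.  The coboundary identity is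
   the same argument with ∂, ∧, lower regular exchanged for δ, ∨, upper regular. *)

From mathcomp Require Import all_boot.
Set Implicit Arguments. Unset Strict Implicit. Unset Printing Implicit Defensive.

Section Chains.
Variable V : finType.
Implicit Types (f g : {set V} -> {set {set V}}) (a b c : {set {set V}}) (x s : {set V}).

Lemma in_symd a b x : (x \in symd a b) = (x \in a) (+) (x \in b).
Proof. by rewrite /symd !inE; case: (x \in a); case: (x \in b). Qed.

Lemma symd0 a : symd a set0 = a.
Proof. by apply/setP => x; rewrite in_symd inE addbF. Qed.

Lemma symd_eq0 a b : symd a b = set0 -> a = b.
Proof.
move=> /setP ab0; apply/setP => x; move: (ab0 x).
by rewrite in_symd inE; case: (x \in a); case: (x \in b).
Qed.

Lemma symd_setD a b : a \subset b -> symd a (b :\: a) = b.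
Proof.
move=> ab; apply/setP => x; rewrite in_symd inE.
by case: (boolP (x \in a)) => [/(subsetP ab)->|].
Qed.

Lemma in_lin f c x : (x \in lin f c) = \big[addb/false]_(s in c) (x \in f s).
Proof.
by apply: (big_morph (fun a => x \in a)) => [a b|]; rewrite ?in_symd ?inE.
Qed.

Lemma lin0 f : lin f set0 = set0.
Proof. by rewrite /lin big_set0. Qed.

Lemma lin_setD1 f c s : s \in c -> lin f c = symd (f s) (lin f (c :\ s)).
Proof.
move=> sc; apply/setP => x; rewrite in_symd !in_lin (bigD1 s) //=; congr addb.
by apply: eq_bigl => y; rewrite !inE andbC.
Qed.

Lemma notin_lin f c x : {in c, forall s, x \notin f s} -> x \notin lin f c.
Proof. by move=> fx; rewrite in_lin big1 // => s /fx /negbTE. Qed.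

Lemma lin_eq0 f c : {in c, forall s, f s = set0} -> lin f c = set0.
Proof.
move=> f0; apply/setP => x; rewrite inE; apply/negbTE/notin_lin => s /f0 ->.
by rewrite inE.
Qed.

Lemma lin_set1_id c : lin (fun s => [set s]) c = c.
Proof.
apply/setP => x; rewrite in_lin (big_mkcond (fun s => s \in c)) (bigD1 x) //=.
rewrite big1 ?inE ?eqxx ?addbF; first by case: (x \in c).
by move=> s /negbTE sx; rewrite inE eq_sym sx; case: (s \in c).
Qed.

Lemma lin_subset f c a : (forall s, f s \subset a) -> lin f c \subset a.
Proof.
move=> fa; apply/subsetP => x; apply: contraTT => xa.
by apply: notin_lin => s _; apply: contraNN xa; apply: (subsetP (fa s)).
Qed.

Lemma lin_symd f a b : lin f (symd a b) = symd (lin f a) (lin f b).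
Proof.
apply/setP => x; rewrite in_symd !in_lin (big_mkcond (fun s => s \in symd a b)).
rewrite (big_mkcond (fun s => s \in a)) (big_mkcond (fun s => s \in b)) -big_split /=.
by apply: eq_bigr => s _; rewrite in_symd; case: (s \in a); case: (s \in b); case: (x \in f s).
Qed.

Lemma lin_comp f g c : lin f (lin g c) = lin (fun s => lin f (g s)) c.
Proof. by rewrite [lin g c]/lin (big_morph (lin f) (lin_symd f) (lin0 f)). Qed.

End Chains.

Lemma big_addb_odd (T : finType) (P : {pred T}) (Q : pred T) :
  \big[addb/false]_(i in P) Q i = odd #|[set i in P | Q i]|.
Proof.
transitivity (\big[addb/false]_(i in [set i in P | Q i]) true).
  rewrite big_mkcond [RHS]big_mkcond; apply: eq_bigr => i _.
  by rewrite !inE; case: (i \in P); case: (Q i).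
by rewrite big_const; elim: #|_| => //= n ->.
Qed.

Section Complexes.
Variable V : finType.
Implicit Types (K : {set {set V}}) (s t x y : {set V}).

Lemma complex_neq0 K s : is_complex K -> s \in K -> s != set0.
Proof. by case=> K0 _; apply: contraTneq => ->. Qed.

Lemma complex_between K x t y : is_complex K -> x \in K -> y \in K ->
  x \subset t -> t \subset y -> t \in K.
Proof.
move=> hK xK yK xt ty; apply: hK.2 yK ty _.
by apply: contraNneq (complex_neq0 hK xK) => t0; rewrite -subset0 -t0.
Qed.

Lemma card_between x y : x \subset y -> #|y| = #|x|.+2 ->
  #|[set t : {set V} | [&& x \subset t, t \subset y & #|t| == #|x|.+1]]| = 2.
Proof.
move=> xy cy; have -> : [set t : {set V} | [&& x \subset t, t \subset y & #|t| == #|x|.+1]]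
    = [set v |: x | v in y :\: x].
  apply/setP => t; rewrite inE; apply/and3P/imsetP => [[xt ty /eqP ct]|[v]].
    have /cards1P[v tx] : #|t :\: x| == 1 by rewrite cardsD (setIidPr xt) ct subSnn.
    have vtx : v \in t :\: x by rewrite tx set11.
    exists v; last by rewrite -(setID t x) (setIidPr xt) tx setUC.
    by move: vtx; rewrite !inE => /andP[-> /(subsetP ty)].
  rewrite inE => /andP[vx vy] ->.
  by rewrite subsetUr subUset sub1set vy xy cardsU1 vx.
rewrite card_in_imset; first by rewrite cardsD (setIidPr xy) cy -addn2 addKn.
move=> v w; rewrite inE => /andP[vx _] _ /setP/(_ v).
by rewrite !inE eqxx (negbTE vx) !orbF => /esym/eqP.
Qed.

Lemma faces_between_even K x y : is_complex K -> x \in K -> y \in K ->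
  ~~ odd #|[set t in K | [&& x \subset t, t \subset y, #|t| == #|x|.+1 & #|t|.+1 == #|y|]]|.
Proof.
move=> hK xK yK; set T := [set t in K | _].
have [->|[t0]] := set_0Vmem T; first by rewrite cards0.
rewrite inE => /andP[_ /and4P[xt0 t0y /eqP ct0 /eqP cy]].
suff -> : T = [set t : {set V} | [&& x \subset t, t \subset y & #|t| == #|x|.+1]].
  by rewrite card_between ?(subset_trans xt0 t0y) // -cy ct0.
apply/setP => t; rewrite !inE -cy ct0 eqSS andbb.
by apply/andb_idl => /and3P[xt ty _]; apply: complex_between hK xK yK xt ty.
Qed.

Lemma bd_subset K s : bd K s \subset K.
Proof. by rewrite /bd setIdE subsetIl. Qed.

Lemma cobd_subset K s : cobd K s \subset K.
Proof. by rewrite /cobd setIdE subsetIl. Qed.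

Lemma in_cobd K s t : s \in K -> (t \in cobd K s) = (t \in K) && (s \in bd K t).
Proof. by move=> sK; rewrite !inE sK /= eq_sym. Qed.

Lemma in_bd K s t : s \in K -> (t \in bd K s) = (t \in K) && (s \in cobd K t).
Proof. by move=> sK; rewrite !inE sK /= eq_sym. Qed.

Lemma bd_bd K y : is_complex K -> y \in K -> lin (bd K) (bd K y) = set0.
Proof.
move=> hK yK; apply/setP => x; rewrite inE; apply/negbTE.
have [xK|xK] := boolP (x \in K); last first.
  by apply: contra xK; apply/subsetP/lin_subset => t; apply: bd_subset.
rewrite in_lin big_addb_odd; have := faces_between_even hK xK yK.
congr (~~ odd _); apply: eq_card => t; rewrite !inE xK [#|x|.+1 == _]eq_sym /=.
by case: (t \in K); case: (x \subset t); case: (t \subset y); rewrite /= ?andbT ?andbF // andbC.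
Qed.

Lemma cobd_cobd K y : is_complex K -> y \in K -> lin (cobd K) (cobd K y) = set0.
Proof.
move=> hK yK; apply/setP => x; rewrite inE; apply/negbTE.
have [xK|xK] := boolP (x \in K); last first.
  by apply: contra xK; apply/subsetP/lin_subset => t; apply: cobd_subset.
rewrite in_lin big_addb_odd; have := faces_between_even hK yK xK.
congr (~~ odd _); apply: eq_card => t; rewrite !inE xK [#|x| == _]eq_sym /=.
by case: (t \in K); case: (y \subset t); case: (t \subset x); rewrite /= ?andbT ?andbF // andbC.
Qed.

End Complexes.

Section MorseSequences.
Variable V : finType.
Implicit Types (K L M z : {set {set V}}) (W : seq (step V)) (n s t u : {set V}).

Definition cells W := crit W :|: lower_reg W :|: upper_reg W.

Lemma crit_cons st W n :
  (n \in crit (st :: W)) = (if st is Fill m then m == n else false) || (n \in crit W).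
Proof. by rewrite !inE. Qed.

Lemma lower_reg_cons st W n :
  (n \in lower_reg (st :: W)) = (if st is Exp s _ then s == n else false) || (n \in lower_reg W).
Proof. by rewrite !inE. Qed.

Lemma upper_reg_cons st W n :
  (n \in upper_reg (st :: W)) = (if st is Exp _ t then t == n else false) || (n \in upper_reg W).
Proof. by rewrite !inE. Qed.

Lemma crit_cells W : crit W \subset cells W.
Proof. by rewrite /cells -setUA subsetUl. Qed.

Lemma lower_reg_cells W : lower_reg W \subset cells W.
Proof. by rewrite /cells setUAC subsetUr. Qed.

Lemma upper_reg_cells W : upper_reg W \subset cells W.
Proof. exact: subsetUr. Qed.

Lemma cells_nil : cells [::] = set0.
Proof. by apply/setP => n; rewrite !inE. Qed.

Lemma cells_cons st W : cells (st :: W) = added st :|: cells W.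
Proof.
apply/setP => n; rewrite !in_setU crit_cons lower_reg_cons upper_reg_cons.
case: st => [m|s t]; rewrite /= ?in_set1 ?in_set2 ![_ == n]eq_sym.
  by rewrite -!orbA.
by case: (n == s); case: (n == t); rewrite /= ?orbT.
Qed.

Lemma valid_step_fresh L st : valid_step L st -> [disjoint added st & L].
Proof.
by case: st => [m [mL _]|s t [sL [tL _]]]; rewrite disjoints_subset ?subUset !sub1set !inE ?sL ?tL.
Qed.

Lemma morse_from_cells L K W : morse_from L K W ->
  K = L :|: cells W /\ [disjoint L & cells W].
Proof.
elim: W L => [|st W IH] L /=.
  by move=> ->; rewrite cells_nil setU0 disjoints_subset setC0 subsetT.
case=> hv /IH[-> fresh]; rewrite cells_cons (setUA L); split => //.
rewrite disjoints_subset setCU subsetI -!disjoints_subset disjoint_sym.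
by rewrite valid_step_fresh //; apply: disjointWl fresh; apply: subsetUl.
Qed.

Lemma morse_from_complex L K W : morse_from L K W -> is_complex L -> is_complex K.
Proof.
elim: W L => [|st W IH] L /=; first by move=> ->.
case: st => [m|s t] [hv /IH hK] _; apply: hK; last by case: hv => _ [_ [_ []]].
by rewrite setUC; case: hv => _ [].
Qed.

Lemma morse_seq_cells K W : morse_seq K W -> K = cells W.
Proof. by case/morse_from_cells; rewrite set0U. Qed.

Lemma morse_seq_complex K W : morse_seq K W -> is_complex K.
Proof. by move/morse_from_complex; apply; split=> [|s t]; rewrite inE. Qed.

Lemma free_pair_card M s t : is_complex M -> free_pair M s t -> #|t| = #|s|.+1.
Proof.
move=> [M0 hM] [st [sM [tM hfree]]]; have [sub [v vt vs]] := properP st.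
suff -> : t = v |: s by rewrite cardsU1 vs.
symmetry; apply: hfree.
- by apply: hM tM _ _; rewrite ?subUset ?sub1set ?vt // -card_gt0 cardsU1 vs.
- exact: subsetUr.
- by apply/eqP => e; move: vs; rewrite -e setU11.
Qed.

Lemma cells_not_face K M W n u : is_complex K -> is_complex M -> morse_from M K W ->
  n \in cells W -> u \in M -> ~~ (n \subset u).
Proof.
move=> hK [_ hM] /morse_from_cells[eK fresh] nW uM; apply/negP => nu.
have nK : n \in K by rewrite eK inE nW orbT.
by move: (disjointFl fresh nW); rewrite (hM u n uM nu (complex_neq0 hK nK)).
Qed.

Lemma expansion_codim1 L K W s t : valid_step L (Exp s t) ->
  morse_from (L :|: [set s; t]) K W -> (s \in bd K t) && (t \in cobd K s).
Proof.
move=> [_ [_ [_ [hM hfree]]]] hm; have [eK _] := morse_from_cells hm.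
have [sK tK] : s \in K /\ t \in K by rewrite eK !inE !eqxx !orbT.
have [/proper_sub st _] := hfree.
by rewrite !inE sK tK st (free_pair_card hM hfree) !eqxx.
Qed.

Lemma expansion_later_not_face L K W s t n : is_complex K ->
  valid_step L (Exp s t) -> morse_from (L :|: [set s; t]) K W ->
  n \in cells W -> ~~ (n \subset t).
Proof.
move=> hK [_ [_ [_ [hM _]]]] hm nW.
by apply: (cells_not_face hK hM hm nW); rewrite in_setU set22 orbT.
Qed.

Lemma upper_reg_chain_eq0 K L W z : is_complex K -> morse_from L K W ->
  {subset z <= upper_reg W} ->
  (forall s, s \in lower_reg W -> s \notin lin (bd K) z) -> z = set0.
Proof.
move=> hK; elim: W L z => [|st W IH] L z /=.
  by move=> _ zU _; apply/eqP; rewrite -subset0; apply/subsetP => n /zU; rewrite inE.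
case: st => [m|s t] [hv hm] zU zL.
  apply: IH hm _ _ => [n /zU|s' s'W]; first by rewrite upper_reg_cons.
  by apply: zL; rewrite lower_reg_cons.
have /andP[bdst _] := expansion_codim1 hv hm.
have later n : n \in lower_reg W -> ~~ (n \subset t).
  by move/(subsetP (lower_reg_cells W)); apply: expansion_later_not_face hK hv hm.
have zLW s' : s' \in lower_reg W -> s' \notin lin (bd K) z.
  by move=> s'W; apply: zL; rewrite lower_reg_cons s'W orbT.
case tz: (t \in z); last first.
  apply: IH hm _ zLW => n nz; move: (zU n nz); rewrite upper_reg_cons /=.
  by case: eqP => [tn|//]; rewrite tn nz in tz.
have ez := lin_setD1 (bd K) tz.
have z't0 : z :\ t = set0.
  apply: IH hm _ _ => [n|s' s'W].
    by rewrite in_setD1 => /andP[nt /zU]; rewrite upper_reg_cons /= eq_sym (negbTE nt).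
  have s'nt : s' \notin bd K t by rewrite inE (negbTE (later s' s'W)) andbF.
  by have := zLW s' s'W; rewrite ez in_symd (negbTE s'nt).
by have := zL s; rewrite lower_reg_cons eqxx ez z't0 lin0 symd0 bdst => /(_ isT).
Qed.

Lemma lower_reg_chain_eq0 K L W z : is_complex K -> morse_from L K W ->
  {subset z <= lower_reg W} ->
  (forall t, t \in upper_reg W -> t \notin lin (cobd K) z) -> z = set0.
Proof.
move=> hK; elim: W L z => [|st W IH] L z /=.
  by move=> _ zL _; apply/eqP; rewrite -subset0; apply/subsetP => n /zL; rewrite inE.
case: st => [m|s t] [hv hm] zL zU.
  apply: IH hm _ _ => [n /zL|t' t'W]; first by rewrite lower_reg_cons.
  by apply: zU; rewrite upper_reg_cons.
have /andP[_ cobdst] := expansion_codim1 hv hm.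
have later n : n \in lower_reg W -> ~~ (n \subset t).
  by move/(subsetP (lower_reg_cells W)); apply: expansion_later_not_face hK hv hm.
case sz: (s \in z); last first.
  apply: IH hm _ _ => [n nz|t' t'W]; last by apply: zU; rewrite upper_reg_cons t'W orbT.
  move: (zL n nz); rewrite lower_reg_cons /=.
  by case: eqP => [sn|//]; rewrite sn nz in sz.
have tnz : t \notin lin (cobd K) (z :\ s).
  apply/notin_lin => n; rewrite in_setD1 => /andP[ns nz].
  have nW : n \in lower_reg W by move: (zL n nz); rewrite lower_reg_cons /= eq_sym (negbTE ns).
  by rewrite inE (negbTE (later n nW)) andbF.
have := zU t; rewrite upper_reg_cons eqxx (lin_setD1 _ sz) in_symd cobdst (negbTE tnz).
by move=> /(_ isT).
Qed.

End MorseSequences.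

(* For the boundary identity (d, dt, f, g, A, B) is (∂, δ, ∧, ∨, lower regular,
   upper regular); for the coboundary identity it is (δ, ∂, ∨, ∧, upper regular,
   lower regular). *)
Section ExtensionCommutes.
Variable V : finType.
Variables (K C A B : {set {set V}}) (d dt f g : {set V} -> {set {set V}}).
Implicit Types (a c w y z : {set {set V}}) (k n s t x : {set V}).

Hypothesis K_cover : K \subset C :|: A :|: B.
Hypothesis CK : C \subset K.
Hypothesis AK : A \subset K.
Hypothesis dK : forall s, d s \subset K.
Hypothesis in_dt : forall s t, s \in K -> (t \in dt s) = (t \in K) && (s \in d t).
Hypothesis dd : forall s, s \in K -> lin d (d s) = set0.
Hypothesis fC : forall n, n \in C -> f n = [set n].
Hypothesis fB : forall n, n \in B -> f n = set0 /\ lin f (d n) = set0.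
Hypothesis gC : forall n, n \in C -> g n = [set n].
Hypothesis gA : forall n, n \in A -> g n = set0 /\ lin g (dt n) = set0.
Hypothesis B_chain_eq0 : forall z, {subset z <= B} ->
  (forall s, s \in A -> s \notin lin d z) -> z = set0.

Local Notation E := (lin (ext K g)).

Lemma ext_lin_subset a : E a \subset K.
Proof. by apply: lin_subset => k; rewrite /ext setIdE subsetIl. Qed.

Lemma notin_ext_lin a n : n \in A -> n \notin E a.
Proof. by move=> nA; apply: notin_lin => k _; rewrite inE (gA nA).1 inE andbF. Qed.

Lemma in_ext_lin_crit a n : n \in C -> (n \in E a) = (n \in a).
Proof.
move=> nC; rewrite in_lin -{2}(lin_set1_id a) in_lin.
by apply: eq_bigr => k _; rewrite inE gC // (subsetP CK) //= !inE eq_sym.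
Qed.

Lemma in_lin_ext s k : s \in K -> (s \in lin d (ext K g k)) = (k \in lin g (dt s)).
Proof.
move=> sK; rewrite !in_lin (big_mkcond (fun t => t \in ext K g k)) [RHS]big_mkcond.
apply: eq_bigr => t _; rewrite inE in_dt //.
by case: (t \in K); case: (k \in g t); case: (s \in d t).
Qed.

Lemma notin_d_ext_lin a s : s \in A -> s \notin lin d (E a).
Proof.
move=> sA; rewrite lin_comp; apply: notin_lin => k _.
by rewrite in_lin_ext ?(subsetP AK) // (gA sA).2 inE.
Qed.

Lemma lin_ref_crit w : w \subset K -> (forall n, n \in A -> n \notin w) ->
  lin f w = w :&: C.
Proof.
move=> wK wA; rewrite -[RHS]lin_set1_id; apply/setP => x; rewrite !in_lin.
rewrite (big_mkcond (fun s => s \in w)) [RHS]big_mkcond; apply: eq_bigr => s _.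
rewrite inE; have [sw|//] := boolP (s \in w).
case/(subsetP K_cover)/setUP: (subsetP wK _ sw) => [/setUP[sC|sA]|sB].
- by rewrite sC fC.
- by move: (wA s sA); rewrite sw.
- by case: (boolP (s \in C)) => [/fC ->//|_]; rewrite (fB sB).1 inE.
Qed.

Lemma ext_lin_crit_part y : y \subset K -> (forall n, n \in A -> n \notin y) ->
  (forall s, s \in A -> s \notin lin d y) -> y = E (y :&: C).
Proof.
move=> yK yA dyA; apply: symd_eq0; apply: B_chain_eq0 => [n|s sA].
  rewrite in_symd => nz.
  have nK : n \in K.
    by case: (boolP (n \in y)) nz => [/(subsetP yK)//|_ /= /(subsetP (ext_lin_subset _))].
  case/(subsetP K_cover)/setUP: nK => [/setUP[nC|nA]|//].
  - by move: nz; rewrite in_ext_lin_crit // inE nC andbT addbb.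
  - by move: nz; rewrite (negbTE (yA _ nA)) (negbTE (notin_ext_lin _ nA)).
by rewrite lin_symd in_symd (negbTE (dyA _ sA)) notin_d_ext_lin.
Qed.

Lemma d_ext_lin c : c \subset C -> lin d (E c) = E (lin f (lin d c)).
Proof.
move=> cC; set X := E c.
have cX : c \subset X by apply/subsetP => n nc; rewrite in_ext_lin_crit // (subsetP cC).
have XcB : {subset X :\: c <= B}.
  move=> n; rewrite inE => /andP[nc nX].
  case/(subsetP K_cover)/setUP: (subsetP (ext_lin_subset c) _ nX) => [/setUP[nC|nA]|//].
  - by rewrite in_ext_lin_crit // (negbTE nc) in nX.
  - by rewrite (negbTE (notin_ext_lin c nA)) in nX.
have dXK : lin d X \subset K by apply: lin_subset.
have dXA n : n \in A -> n \notin lin d X by apply: notin_d_ext_lin.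
have ddX : lin d (lin d X) = set0.
  by rewrite lin_comp; apply: lin_eq0 => s /(subsetP (ext_lin_subset c)); apply: dd.
rewrite (ext_lin_crit_part dXK dXA) => [|s _]; last by rewrite ddX inE.
rewrite -(lin_ref_crit dXK dXA); congr E.
rewrite -{1}(symd_setD cX) !lin_symd (lin_comp f d (X :\: c)) [lin _ (X :\: c)]lin_eq0 ?symd0 //.
by move=> t /XcB /fB[].
Qed.

End ExtensionCommutes.

Theorem theorem9 (V : finType) (K : {set {set V}}) (W : seq (step V))
  (hW : morse_seq K W)
  (up down : {set V} -> {set {set V}})
  (hup : is_reference K W up) (hdown : is_coreference K W down)
  (p : nat) (c : {set {set V}}) (hc : c \subset critp K W p) :
  (* ∂_p (\tilde∧_p c) = \tilde∧_{p-1} (\hat∂_p c), where \hat∂ = ∧ ∘ ∂ and \tilde∧ uses ∨ *)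
  lin (bd K) (lin (ext K down) c) = lin (ext K down) (lin up (lin (bd K) c)) /\
  (* δ_p (\tilde∨_p c) = \tilde∨_{p+1} (\hat δ_p c), where \hat δ = ∨ ∘ δ and \tilde∨ uses ∧ *)
  lin (cobd K) (lin (ext K up) c) = lin (ext K up) (lin down (lin (cobd K) c)).
Proof.
have hK := morse_seq_complex hW; have eK := morse_seq_cells hW.
have [_ [upC upU]] := hup; have [_ [downC downL]] := hdown.
have cC : c \subset crit W by apply: subset_trans hc _; rewrite /critp setIdE subsetIl.
split.
- apply: (d_ext_lin (C := crit W) (A := lower_reg W) (B := upper_reg W) (dt := cobd K)) => //.
  + by rewrite eK /cells.
  + by rewrite eK crit_cells.
  + by rewrite eK lower_reg_cells.
  + exact: bd_subset.
  + exact: in_cobd.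
  + by move=> s; apply: bd_bd.
  + by move=> z; apply: upper_reg_chain_eq0 hK hW.
- apply: (d_ext_lin (C := crit W) (A := upper_reg W) (B := lower_reg W) (dt := bd K)) => //.
  + by rewrite eK /cells setUAC.
  + by rewrite eK crit_cells.
  + by rewrite eK upper_reg_cells.
  + exact: cobd_subset.
  + exact: in_bd.
  + by move=> s; apply: cobd_cobd.
  + by move=> z; apply: lower_reg_chain_eq0 hK hW.
Qed.
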